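(* On any labelled transition system, the relations $\leftrightarrow_b$, $\leftrightarrow_b^{ds}$ and $\leftrightarrow_b^{\Delta}$ are equivalence relations.
   Context: Fix a set $\mathrm{Act}$ of actions containing a special action $\tau$. An LTS is $(S,\to)$ with $\to\subseteq S\times\mathrm{Act}\times S$. A path from $s$ is an alternating sequence $s_0,a_1,s_1,a_2,\dots$ (ending with a state if finite) with $s_0=s$ and $s_{k-1}\xrightarrow{a_k}s_k$; it is maximal if infinite or if its last state has no outgoing transitions. A colouring is a function $\mathcal{C}$ from $S$ into an arbitrary set of colours. For a path $\pi$, $\mathcal{C}(\pi)$ is obtained from $\mathcal{C}(s_0),a_1,\mathcal{C}(s_1),a_2,\dots$ by contracting every finite maximal consecutive subsequence $C,\tau,C,\tau,\dots,\tau,C$ and every infinite one $C,\tau,C,\tau,\dots$ to $C$. For $\pi$ from $s$, $\mathcal{C}(\pi)$ is a $\mathcal{C}$-coloured trace of $s$; complete if $\pi$ is maximal; divergent if $\pi$ is infinite and $\mathcal{C}(\pi)$ finite. $\mathcal{C}$ is consistent if any two states of equal colour have the same $\mathcal{C}$-coloured traces; fully consistent if any two states of equal colour have the same complete $\mathcal{C}$-coloured traces; a consistent $\mathcal{C}$ preserves divergence if any two states of equal colour have the same divergent $\mathcal{C}$-coloured traces. $s\leftrightarrow_b t$ iff some consistent colouring $\mathcal{C}$ has $\mathcal{C}(s)=\mathcal{C}(t)$; $s\leftrightarrow_b^{ds}t$ iff some fully consistent colouring $\mathcal{C}$ has $\mathcal{C}(s)=\mathcal{C}(t)$; $s\leftrightarrow_b^{\Delta}t$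 iff some consistent, divergence preserving colouring $\mathcal{C}$ has $\mathcal{C}(s)=\mathcal{C}(t)$. *)

From Stdlib Require Import Arith RelationClasses.

Section LTS.
Variable Act : Type.
Variable tau : Act.
Variable St : Type.
Variable trans : St -> Act -> St -> Prop.

(* A (possibly infinite) sequence is a function nat -> option X whose
   domain is an initial segment of nat. *)
Definition prefix_closed {X : Type} (f : nat -> option X) : Prop :=
  forall n, f (S n) <> None -> f n <> None.

(* A path s0, a1, s1, a2, s2, ... : p0 = s0 and steps k = Some (a_{k+1}, s_{k+1}). *)
Record path := mkPath { p0 : St; steps : nat -> option (Act * St) }.

Definition state_before (p : path) (k : nat) : St :=
  match k with
  | 0 => p0 p
  | S k' => match steps p k' with Some (_, s) => s | None => p0 p end
  end.

Definition valid_path (p : path) : Prop :=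
  prefix_closed (steps p) /\
  forall k a s, steps p k = Some (a, s) -> trans (state_before p k) a s.

Definition path_from (s : St) (p : path) : Prop := p0 p = s /\ valid_path p.

Definition infinite_path (p : path) : Prop := forall n, steps p n <> None.

Definition maximal_path (p : path) : Prop :=
  infinite_path p \/
  exists n, steps p n = None /\ (forall m, m < n -> steps p m <> None) /\
            forall a s', ~ trans (state_before p n) a s'.

Definition ctrace (Col : Type) : Type := (Col * (nat -> option (Act * Col)))%type.

Section Colouring.
Variable Col : Type.
Variable C : St -> Col.

(* step k survives the contraction of C,tau,C,...,tau,C blocks to C *)
Definition visible (p : path) (k : nat) : Prop :=
  exists a s, steps p k = Some (a, s) /\
              (a <> tau \/ C s <> C (state_before p k)).

(* tr = C(p): the visible steps, enumerated in order by g *)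
Definition contracts (p : path) (tr : ctrace Col) : Prop :=
  fst tr = C (p0 p) /\ prefix_closed (snd tr) /\
  exists g : nat -> nat,
    (forall n m, n < m -> snd tr m <> None -> g n < g m) /\
    (forall n x, snd tr n = Some x ->
       visible p (g n) /\
       exists a s, steps p (g n) = Some (a, s) /\ x = (a, C s)) /\
    (forall k, visible p k -> exists n, snd tr n <> None /\ g n = k).

Definition finite_trace (tr : ctrace Col) : Prop := exists n, snd tr n = None.

Definition coloured_trace (s : St) (tr : ctrace Col) : Prop :=
  exists p, path_from s p /\ contracts p tr.

Definition complete_coloured_trace (s : St) (tr : ctrace Col) : Prop :=
  exists p, path_from s p /\ maximal_path p /\ contracts p tr.

Definition divergent_coloured_trace (s : St) (tr : ctrace Col) : Prop :=
  exists p, path_from s p /\ infinite_path p /\ contracts p tr /\ finite_trace tr.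

Definition consistent : Prop :=
  forall s t, C s = C t -> forall tr, coloured_trace s tr <-> coloured_trace t tr.

Definition fully_consistent : Prop :=
  forall s t, C s = C t ->
    forall tr, complete_coloured_trace s tr <-> complete_coloured_trace t tr.

Definition divergence_preserving : Prop :=
  forall s t, C s = C t ->
    forall tr, divergent_coloured_trace s tr <-> divergent_coloured_trace t tr.
End Colouring.

Definition branching_bisim (s t : St) : Prop :=
  exists (Col : Type) (C : St -> Col), consistent Col C /\ C s = C t.

Definition branching_bisim_ds (s t : St) : Prop :=
  exists (Col : Type) (C : St -> Col), fully_consistent Col C /\ C s = C t.

Definition branching_bisim_div (s t : St) : Prop :=
  exists (Col : Type) (C : St -> Col),
    consistent Col C /\ divergence_preserving Col C /\ C s = C t.
End LTS.

(* For transitivity, two consistent colourings C1 and C2 are merged into the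
   colouring whose colour of x is the class of x under the equivalence generated
   by "same C1-colour or same C2-colour".  This colouring D factors through C1,
   and the D-trace of a path is obtained by contracting its C1-trace once more,
   so it depends only on the C1-trace.  Hence states of equal C1-colour, and
   likewise of equal C2-colour, have the same D-traces, and so do all states in
   one D-class.  The same works for complete traces, and for divergent ones: a
   divergent D-trace whose C1-trace is infinite is carried over by consistency,
   since a path contracting to an infinite trace is infinite. *)
From Stdlib Require Import RelationClasses Arith Lia Classical ClassicalEpsilon.
From Stdlib Require Import FunctionalExtensionality PropExtensionality Relation_Operators.

#[local] Arguments p0 {Act St}.
#[local] Arguments steps {Act St}.
#[local] Arguments state_before {Act St}.
#[local] Arguments path_from {Act St}.
#[local] Arguments infinite_path {Act St}.
#[local] Arguments visible {Act} tau {St Col}.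
#[local] Arguments contracts {Act} tau {St Col}.
#[local] Arguments finite_trace {Act Col}.
#[local] Arguments coloured_trace {Act} tau {St} trans {Col}.
#[local] Arguments complete_coloured_trace {Act} tau {St} trans {Col}.
#[local] Arguments divergent_coloured_trace {Act} tau {St} trans {Col}.
#[local] Arguments consistent {Act} tau {St} trans {Col}.
#[local] Arguments fully_consistent {Act} tau {St} trans {Col}.
#[local] Arguments divergence_preserving {Act} tau {St} trans {Col}.

Lemma prefix_closed_le {X : Type} (f : nat -> option X) k j :
  prefix_closed f -> f k <> None -> j <= k -> f j <> None.
Proof. intros Hf Hk Hjk; induction Hjk; auto. Qed.

Section ColouredTraces.
Variables (Act : Type) (tau : Act) (St : Type) (trans : St -> Act -> St -> Prop).

(* A C-trace read as a path over colours: contracting it along f : Col -> Col'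
   yields the (f o C)-trace of the original path (contracts_coarsen_iff). *)
Definition ctrace_path {Col : Type} (tr : ctrace Act Col) : path Act Col :=
  mkPath Act Col (fst tr) (snd tr).

Section VisibleCount.
Variables (Col : Type) (C : St -> Col) (p : path Act St).

Definition visible_count_step k :=
  if excluded_middle_informative (visible tau C p k) then 1 else 0.

Fixpoint visible_count k :=
  match k with 0 => 0 | S k => visible_count k + visible_count_step k end.

Lemma visible_count_mono k1 k2 : k1 <= k2 -> visible_count k1 <= visible_count k2.
Proof. intros H; induction H; simpl; lia. Qed.

Lemma visible_count_visible k :
  visible tau C p k -> visible_count (S k) = S (visible_count k).
Proof.
  intros H; simpl; unfold visible_count_step.
  destruct (excluded_middle_informative _); [lia | contradiction].
Qed.

Lemma visible_count_inj k1 k2 : visible tau C p k1 -> visible tau C p k2 ->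
  visible_count k1 = visible_count k2 -> k1 = k2.
Proof.
  intros H1 H2 He.
  assert (strict : forall i j, visible tau C p i -> i < j -> visible_count i < visible_count j).
  { intros i j Hi Hij.
    pose proof (visible_count_visible i Hi); pose proof (visible_count_mono (S i) j Hij); lia. }
  destruct (lt_eq_lt_dec k1 k2) as [[l | l] | l]; auto.
  - pose proof (strict _ _ H1 l); lia.
  - pose proof (strict _ _ H2 l); lia.
Qed.

Lemma visible_count_below k n : n < visible_count k ->
  exists k', k' < k /\ visible tau C p k' /\ visible_count k' = n.
Proof.
  induction k as [| k IHk]; simpl; [lia |].
  unfold visible_count_step; destruct (excluded_middle_informative _) as [Hv | Hv]; intros Hn.
  - destruct (Nat.eq_dec n (visible_count k)) as [-> | ne]; [exists k; auto |].
    destruct IHk as (k' & ? & ? & ?); [lia |]. exists k'; auto.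
  - destruct IHk as (k' & ? & ? & ?); [lia |]. exists k'; auto.
Qed.

Definition nth_visible n : option nat :=
  match excluded_middle_informative (exists k, visible tau C p k /\ visible_count k = n) with
  | left H => Some (proj1_sig (constructive_indefinite_description _ H))
  | right _ => None
  end.

Lemma nth_visible_Some n k :
  nth_visible n = Some k -> visible tau C p k /\ visible_count k = n.
Proof.
  unfold nth_visible; destruct (excluded_middle_informative _); [| discriminate].
  destruct (constructive_indefinite_description _ _) as [x Hx]; simpl.
  now intros [= <-].
Qed.

Lemma nth_visible_count k :
  visible tau C p k -> nth_visible (visible_count k) = Some k.
Proof.
  intros Hv; destruct (nth_visible (visible_count k)) as [k' |] eqn:E.
  - apply nth_visible_Some in E as [Hv' Hc]. f_equal; now apply visible_count_inj.
  - unfold nth_visible in E; destruct (excluded_middle_informative _) as [| nex];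
      [discriminate | exfalso; eauto].
Qed.

Lemma contracts_exists : exists tr, contracts tau C p tr.
Proof.
  set (trace_step n := match nth_visible n with
    | Some k => match steps p k with Some (a, s) => Some (a, C s) | None => None end
    | None => None end).
  assert (trace_step_def : forall k, visible tau C p k ->
            trace_step (visible_count k) <> None).
  { intros k Hv; unfold trace_step; rewrite (nth_visible_count k Hv).
    destruct Hv as (a & s & -> & _); discriminate. }
  assert (trace_step_Some : forall n, trace_step n <> None ->
            exists k, nth_visible n = Some k /\ visible tau C p k /\ visible_count k = n).
  { intros n; unfold trace_step; destruct (nth_visible n) as [k |] eqn:E; [| easy].
    intros _; apply nth_visible_Some in E as [? ?]; eauto. }
  exists (C (p0 p), trace_step); split; [reflexivity | split].
  - intros n Hn; destruct (trace_step_Some _ Hn) as (k & _ & _ & Hc).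
    destruct (visible_count_below k n) as (k' & _ & Hv' & <-); [lia |].
    now apply trace_step_def.
  - exists (fun n => match nth_visible n with Some k => k | None => 0 end).
    split; [| split]; simpl.
    + intros n m Hnm Hm; destruct (trace_step_Some _ Hm) as (k & -> & Hv & Hc).
      destruct (visible_count_below k n) as (k' & Hlt & Hv' & <-); [lia |].
      now rewrite (nth_visible_count k' Hv').
    + intros n x Hx; destruct (trace_step_Some n) as (k & Ek & Hv & _); [congruence |].
      rewrite Ek; split; [easy |].
      unfold trace_step in Hx; rewrite Ek in Hx.
      destruct (steps p k) as [[a s] |]; [| discriminate].
      exists a, s; split; congruence.
    + intros k Hv; exists (visible_count k); rewrite (nth_visible_count k Hv).
      split; [now apply trace_step_def | reflexivity].
Qed.
End VisibleCount.

Lemma invisible_run_colour {Col} (C : St -> Col) p k d :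
  (forall j, k <= j < k + d -> steps p j <> None /\ ~ visible tau C p j) ->
  C (state_before p (k + d)) = C (state_before p k).
Proof.
  induction d as [| d IHd]; intros H; [now rewrite Nat.add_0_r |].
  rewrite Nat.add_succ_r; simpl.
  destruct (H (k + d)) as [Hd Hnv]; [lia |].
  destruct (steps p (k + d)) as [[a s] |] eqn:Es; [| congruence].
  rewrite <- IHd by (intros; apply H; lia).
  apply NNPP; intros Hne; apply Hnv; exists a, s; auto.
Qed.

Lemma visible_comp {Col Col'} (C : St -> Col) (f : Col -> Col') p k :
  visible tau (fun x => f (C x)) p k -> visible tau C p k.
Proof.
  intros (a & s & Hs & [Ha | Hc]); exists a, s; split; auto.
  right; intros e; apply Hc; now rewrite e.
Qed.

Section Coarsening.
Variables (Col Col' : Type) (C : St -> Col) (f : Col -> Col').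
Variables (p : path Act St) (tr : ctrace Act Col) (g : nat -> nat).
Hypothesis path_closed : prefix_closed (steps p).
Hypothesis trace_fst : fst tr = C (p0 p).
Hypothesis trace_closed : prefix_closed (snd tr).
Hypothesis g_mono : forall n m, n < m -> snd tr m <> None -> g n < g m.
Hypothesis g_step : forall n x, snd tr n = Some x ->
  visible tau C p (g n) /\ exists a s, steps p (g n) = Some (a, s) /\ x = (a, C s).
Hypothesis g_onto : forall k, visible tau C p k -> exists n, snd tr n <> None /\ g n = k.

Lemma g_lt_reflect n m : snd tr n <> None -> g n < g m -> n < m.
Proof.
  intros Hn Hlt; destruct (lt_eq_lt_dec n m) as [[l | l] | l]; [easy | subst; lia |].
  specialize (g_mono _ _ l Hn); lia.
Qed.

Lemma g_inj n m : snd tr n <> None -> snd tr m <> None -> g n = g m -> n = m.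
Proof.
  intros Hn Hm He; destruct (lt_eq_lt_dec n m) as [[l | l] | l]; auto.
  - specialize (g_mono _ _ l Hm); lia.
  - specialize (g_mono _ _ l Hn); lia.
Qed.

Lemma steps_defined_before n j : snd tr n <> None -> j <= g n -> steps p j <> None.
Proof.
  intros Hn Hj; destruct (snd tr n) as [x |] eqn:E; [| easy].
  destruct (g_step _ _ E) as (_ & a & s & Hs & _).
  apply (prefix_closed_le _ (g n)); [easy | congruence | easy].
Qed.

Lemma invisible_before n j : snd tr n <> None -> j < g n ->
  (forall m, m < n -> g m < j) -> ~ visible tau C p j.
Proof.
  intros Hn Hj Hbefore Hv; destruct (g_onto _ Hv) as (m & Hm & <-).
  specialize (Hbefore m (g_lt_reflect m n Hm Hj)); lia.
Qed.

(* Between two consecutive visible steps only tau-steps inside one colour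
   occur, so the colour in front of the n-th visible step is the colour the
   trace shows just before its n-th step. *)
Lemma colour_before_visible n : snd tr n <> None ->
  C (state_before p (g n)) = state_before (ctrace_path tr) n.
Proof.
  intros Hn; destruct n as [| n]; simpl.
  - rewrite trace_fst; change (g 0) with (0 + g 0).
    rewrite invisible_run_colour; [reflexivity |].
    intros j Hj; split; [apply (steps_defined_before 0); [easy | lia] |].
    apply (invisible_before 0); [easy | lia | lia].
  - destruct (snd tr n) as [[a c] |] eqn:E; [| exfalso; now apply (trace_closed n)].
    destruct (g_step _ _ E) as (_ & a' & s & Hs & [= <- ->]).
    assert (Hlt : g n < g (S n)) by (apply g_mono; auto).
    replace (g (S n)) with (S (g n) + (g (S n) - S (g n))) by lia.
    rewrite invisible_run_colour; [simpl; now rewrite Hs |].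
    intros j Hj; split; [apply (steps_defined_before (S n)); [easy | lia] |].
    apply (invisible_before (S n)); [easy | lia |].
    intros m Hm; assert (m = n \/ m < n) as [-> | Hmn] by lia; [lia |].
    specialize (g_mono m n Hmn ltac:(congruence)); lia.
Qed.
Lemma visible_coarsen n : snd tr n <> None ->
  visible tau (fun x => f (C x)) p (g n) <-> visible tau f (ctrace_path tr) n.
Proof.
  intros Hn; pose proof (colour_before_visible n Hn) as Hcol.
  destruct (snd tr n) as [x |] eqn:E; [| easy].
  destruct (g_step _ _ E) as (_ & a & s & Hs & ->).
  unfold visible; simpl; rewrite E, Hs, <- Hcol; split.
  - intros (a' & s' & [= <- <-] & Hd); eauto.
  - intros (a' & c & [= <- <-] & Hd); eauto.
Qed.

Lemma contracts_coarsen_trace trD :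
  contracts tau (fun x => f (C x)) p trD -> contracts tau f (ctrace_path tr) trD.
Proof.
  intros (Hfst & Hclosed & h & h_mono & h_step & h_onto).
  assert (Hm : exists m, forall j, snd trD j <> None ->
            snd tr (m j) <> None /\ g (m j) = h j).
  { apply (choice (fun j n => snd trD j <> None -> snd tr n <> None /\ g n = h j)).
    intros j.
    destruct (snd trD j) as [x |] eqn:E; [| now exists 0].
    destruct (h_step _ _ E) as [Hv _].
    destruct (g_onto _ (visible_comp C f p _ Hv)) as (n & Hn & Hgn); eauto. }
  destruct Hm as [m Hm].
  split; [simpl; congruence | split; [easy |]].
  exists m; split; [| split].
  - intros j k Hjk Hk.
    assert (Hj : snd trD j <> None) by (apply (prefix_closed_le _ k); auto; lia).
    destruct (Hm j Hj) as [Hmj Hgj], (Hm k Hk) as [_ Hgk].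
    apply (g_lt_reflect _ _ Hmj); rewrite Hgj, Hgk; auto.
  - intros j x E; destruct (Hm j ltac:(congruence)) as [Hmj Hgj].
    destruct (h_step _ _ E) as [Hv (a & s & Hs & ->)].
    rewrite <- Hgj, visible_coarsen in Hv by easy; split; [easy |].
    destruct (snd tr (m j)) as [y |] eqn:Ey; [| easy].
    destruct (g_step _ _ Ey) as (_ & a' & s' & Hs' & ->).
    rewrite Hgj, Hs in Hs'; injection Hs' as <- <-.
    exists a, (C s); simpl; now rewrite Ey.
  - intros n Hv.
    assert (Hn : snd tr n <> None) by (destruct Hv as (a & c & Hs & _); simpl in Hs; congruence).
    rewrite <- visible_coarsen in Hv by easy.
    destruct (h_onto _ Hv) as (j & Hj & Hhj).
    destruct (Hm j Hj) as [Hmj Hgj].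
    exists j; split; [easy |]; apply g_inj; congruence.
Qed.

Lemma contracts_coarsen_path trD :
  contracts tau f (ctrace_path tr) trD -> contracts tau (fun x => f (C x)) p trD.
Proof.
  intros (Hfst & Hclosed & h & h_mono & h_step & h_onto).
  split; [simpl in Hfst; congruence | split; [easy |]].
  exists (fun j => g (h j)); split; [| split].
  - intros j k Hjk Hk; apply g_mono; auto.
    destruct (snd trD k) as [x |] eqn:E; [| easy].
    destruct (h_step _ _ E) as (_ & a & c & Hs & _); simpl in Hs; congruence.
  - intros j x E; destruct (h_step _ _ E) as [Hv (a & c & Hs & ->)]; simpl in Hs.
    destruct (g_step _ _ Hs) as (_ & a' & s & Hs' & [= <- ->]).
    rewrite <- visible_coarsen in Hv by congruence; eauto.
  - intros k Hv; destruct (g_onto _ (visible_comp C f p _ Hv)) as (n & Hn & <-).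
    rewrite visible_coarsen in Hv by easy.
    destruct (h_onto _ Hv) as (j & Hj & <-); eauto.
Qed.
End Coarsening.

Lemma contracts_coarsen_iff {Col Col'} (C : St -> Col) (f : Col -> Col') p tr trD :
  prefix_closed (steps p) -> contracts tau C p tr ->
  contracts tau (fun x => f (C x)) p trD <-> contracts tau f (ctrace_path tr) trD.
Proof.
  intros Hp (Hfst & Hclosed & g & g_mono & g_step & g_onto); split.
  - eapply contracts_coarsen_trace; eauto.
  - eapply contracts_coarsen_path; eauto.
Qed.

Lemma contracts_transfer {Col Col'} (C : St -> Col) (f : Col -> Col') p q tr trD :
  prefix_closed (steps p) -> prefix_closed (steps q) ->
  contracts tau C p tr -> contracts tau C q tr ->
  contracts tau (fun x => f (C x)) p trD -> contracts tau (fun x => f (C x)) q trD.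
Proof.
  intros Hp Hq Hcp Hcq.
  rewrite (contracts_coarsen_iff C f p tr trD Hp Hcp), (contracts_coarsen_iff C f q tr trD Hq Hcq).
  easy.
Qed.

Lemma contracts_infinite_path {Col} (C : St -> Col) q tr :
  prefix_closed (steps q) -> contracts tau C q tr -> ~ finite_trace tr -> infinite_path q.
Proof.
  intros Hq (_ & _ & g & g_mono & g_step & _) Hinf.
  assert (Htr : forall n, snd tr n <> None) by (intros n e; apply Hinf; now exists n).
  assert (Hg : forall n, n <= g n).
  { induction n as [| n IHn]; [lia |].
    specialize (g_mono n (S n) ltac:(lia) (Htr _)); lia. }
  intros n; apply (prefix_closed_le _ (g n)); [easy | | apply Hg].
  destruct (snd tr n) as [x |] eqn:E; [| now destruct (Htr n)].
  destruct (g_step _ _ E) as (_ & a & s & -> & _); discriminate.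
Qed.

(* By consistency the C-trace of the given path is realised from t, and the
   realising path then contracts to the same (f o C)-trace. *)
Lemma coloured_trace_coarsen {Col Col'} (C : St -> Col) (f : Col -> Col') :
  consistent tau trans C -> forall s t, C s = C t -> forall trD,
  coloured_trace tau trans (fun x => f (C x)) s trD ->
  coloured_trace tau trans (fun x => f (C x)) t trD.
Proof.
  intros HC s t Hst trD (p & Hp & HpD).
  destruct (contracts_exists Col C p) as [tr Htr].
  destruct (proj1 (HC s t Hst tr) (ex_intro _ p (conj Hp Htr))) as (q & Hq & Hqtr).
  exists q; split; [easy |].
  apply (contracts_transfer C f p q tr); auto; [apply Hp | apply Hq].
Qed.

Lemma complete_coloured_trace_coarsen {Col Col'} (C : St -> Col) (f : Col -> Col') :
  fully_consistent tau trans C -> forall s t, C s = C t -> forall trD,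
  complete_coloured_trace tau trans (fun x => f (C x)) s trD ->
  complete_coloured_trace tau trans (fun x => f (C x)) t trD.
Proof.
  intros HC s t Hst trD (p & Hp & Hmax & HpD).
  destruct (contracts_exists Col C p) as [tr Htr].
  destruct (proj1 (HC s t Hst tr) (ex_intro _ p (conj Hp (conj Hmax Htr))))
    as (q & Hq & Hqmax & Hqtr).
  exists q; split; [easy | split; [easy |]].
  apply (contracts_transfer C f p q tr); auto; [apply Hp | apply Hq].
Qed.

Lemma divergent_coloured_trace_coarsen {Col Col'} (C : St -> Col) (f : Col -> Col') :
  consistent tau trans C -> divergence_preserving tau trans C ->
  forall s t, C s = C t -> forall trD,
  divergent_coloured_trace tau trans (fun x => f (C x)) s trD ->
  divergent_coloured_trace tau trans (fun x => f (C x)) t trD.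
Proof.
  intros HC HCdiv s t Hst trD (p & Hp & Hinf & HpD & Hfin).
  destruct (contracts_exists Col C p) as [tr Htr].
  assert (Hq : exists q, path_from trans t q /\ infinite_path q /\ contracts tau C q tr).
  { destruct (classic (finite_trace tr)) as [Htrfin | Htrinf].
    - destruct (proj1 (HCdiv s t Hst tr) (ex_intro _ p (conj Hp (conj Hinf (conj Htr Htrfin)))))
        as (q & Hq & Hqinf & Hqtr & _).
      eauto.
    - destruct (proj1 (HC s t Hst tr) (ex_intro _ p (conj Hp Htr))) as (q & Hq & Hqtr).
      exists q; split; [easy | split; [| easy]].
      apply (contracts_infinite_path C q tr); [apply Hq | easy | easy]. }
  destruct Hq as (q & Hq & Hqinf & Hqtr).
  exists q; split; [easy | split; [easy | split; [| easy]]].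
  apply (contracts_transfer C f p q tr); auto; [apply Hp | apply Hq].
Qed.

Section Join.
Variables (Col1 Col2 : Type) (C1 : St -> Col1) (C2 : St -> Col2).

Definition join_rel (x y : St) : Prop := C1 x = C1 y \/ C2 x = C2 y.

Definition join_colour (x : St) : St -> Prop := clos_refl_sym_trans St join_rel x.

Definition join_lift {Col} (C : St -> Col) (c : Col) : St -> Prop :=
  fun y => exists x, C x = c /\ join_colour x y.

Lemma join_colour_factors {Col} (C : St -> Col) :
  (forall x y, C x = C y -> join_rel x y) -> join_colour = fun x => join_lift C (C x).
Proof.
  intros HC; apply functional_extensionality; intros x.
  apply functional_extensionality; intros y; apply propositional_extensionality.
  split; [intros H; now exists x |].
  intros (x' & Hx' & H); apply rst_trans with x'; [| easy].
  now apply rst_step, HC.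
Qed.

Lemma join_colour_invariant (P : St -> Prop) :
  (forall x y, join_rel x y -> P x -> P y) ->
  forall s t, join_colour s = join_colour t -> P s <-> P t.
Proof.
  intros HP s t Hst.
  assert (Hcl : clos_refl_sym_trans St join_rel s t).
  { change (join_colour s t); rewrite Hst; apply rst_refl. }
  clear Hst; induction Hcl as [x y Hxy | | | ]; [| tauto | tauto | tauto].
  split; apply HP; [easy |].
  destruct Hxy; [left | right]; congruence.
Qed.

Lemma join_colour_link s t u : C1 s = C1 t -> C2 t = C2 u -> join_colour s = join_colour u.
Proof.
  intros H1 H2.
  assert (Hsu : clos_refl_sym_trans St join_rel s u)
    by (apply rst_trans with t; apply rst_step; [left | right]; easy).
  apply functional_extensionality; intros y; apply propositional_extensionality.
  split; intros H.
  - apply rst_trans with s; [now apply rst_sym | easy].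
  - now apply rst_trans with u.
Qed.

Lemma join_consistent :
  consistent tau trans C1 -> consistent tau trans C2 -> consistent tau trans join_colour.
Proof.
  intros H1 H2 s t Hst tr.
  apply (join_colour_invariant (fun x => coloured_trace tau trans join_colour x tr)); [| easy].
  intros x y [e | e].
  - rewrite (join_colour_factors C1) by (intros; now left).
    now apply (coloured_trace_coarsen C1).
  - rewrite (join_colour_factors C2) by (intros; now right).
    now apply (coloured_trace_coarsen C2).
Qed.

Lemma join_fully_consistent :
  fully_consistent tau trans C1 -> fully_consistent tau trans C2 ->
  fully_consistent tau trans join_colour.
Proof.
  intros H1 H2 s t Hst tr.
  apply (join_colour_invariant
           (fun x => complete_coloured_trace tau trans join_colour x tr)); [| easy].
  intros x y [e | e].
  - rewrite (join_colour_factors C1) by (intros; now left).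
    now apply (complete_coloured_trace_coarsen C1).
  - rewrite (join_colour_factors C2) by (intros; now right).
    now apply (complete_coloured_trace_coarsen C2).
Qed.

Lemma join_divergence_preserving :
  consistent tau trans C1 -> consistent tau trans C2 ->
  divergence_preserving tau trans C1 -> divergence_preserving tau trans C2 ->
  divergence_preserving tau trans join_colour.
Proof.
  intros H1 H2 H1div H2div s t Hst tr.
  apply (join_colour_invariant
           (fun x => divergent_coloured_trace tau trans join_colour x tr)); [| easy].
  intros x y [e | e].
  - rewrite (join_colour_factors C1) by (intros; now left).
    now apply (divergent_coloured_trace_coarsen C1).
  - rewrite (join_colour_factors C2) by (intros; now right).
    now apply (divergent_coloured_trace_coarsen C2).
Qed.
End Join.

Lemma branching_bisim_Equivalence : Equivalence (branching_bisim Act tau St trans).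
Proof.
  split.
  - intros s; exists St, (fun x => x); split; [| easy].
    intros a b ->; reflexivity.
  - intros s t (Col & C & HC & e); now exists Col, C.
  - intros s t u (Col1 & C1 & HC1 & e1) (Col2 & C2 & HC2 & e2).
    exists (St -> Prop), (join_colour _ _ C1 C2); split.
    + now apply join_consistent.
    + now apply join_colour_link with t.
Qed.

Lemma branching_bisim_ds_Equivalence : Equivalence (branching_bisim_ds Act tau St trans).
Proof.
  split.
  - intros s; exists St, (fun x => x); split; [| easy].
    intros a b ->; reflexivity.
  - intros s t (Col & C & HC & e); now exists Col, C.
  - intros s t u (Col1 & C1 & HC1 & e1) (Col2 & C2 & HC2 & e2).
    exists (St -> Prop), (join_colour _ _ C1 C2); split.
    + now apply join_fully_consistent.
    + now apply join_colour_link with t.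
Qed.

Lemma branching_bisim_div_Equivalence : Equivalence (branching_bisim_div Act tau St trans).
Proof.
  split.
  - intros s; exists St, (fun x => x); split; [| split; [| easy]];
      intros a b ->; reflexivity.
  - intros s t (Col & C & HC & HCdiv & e); now exists Col, C.
  - intros s t u (Col1 & C1 & HC1 & HC1div & e1) (Col2 & C2 & HC2 & HC2div & e2).
    exists (St -> Prop), (join_colour _ _ C1 C2); split; [| split].
    + now apply join_consistent.
    + now apply join_divergence_preserving.
    + now apply join_colour_link with t.
Qed.
End ColouredTraces.

Theorem theorem3p6 (Act : Type) (tau : Act) (St : Type)
  (trans : St -> Act -> St -> Prop) :
  Equivalence (branching_bisim Act tau St trans) /\
  Equivalence (branching_bisim_ds Act tau St trans) /\
  Equivalence (branching_bisim_div Act tau St trans).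
Proof.
  split; [| split].
  - apply branching_bisim_Equivalence.
  - apply branching_bisim_ds_Equivalence.
  - apply branching_bisim_div_Equivalence.
Qed.
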